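(* For every integer $k\ge 1$, let $B_k$ be the graph with vertex set $\{b^i_j \mid i,j\in\{1,\ldots,k\}\}$ in which $b^i_j$ and $b^{i'}_{j'}$ are adjacent if and only if $i\ne i'$ and $j\ne j'$ (i.e. $B_k$ is the complement of the Cartesian product $K_k\square K_k$). Let $\alpha^k$ and $\beta^k$ be the $k$-colorings of $B_k$ given by $\alpha^k(b^i_j)=i$ and $\beta^k(b^i_j)=j$. Then (1) every recoloring sequence from $\alpha^k$ to $\beta^k$ contains a coloring that uses at least $2k-1$ different colors; and (2) there exists a $(2k-1)$-recoloring sequence from $\alpha^k$ to $\beta^k$ of length at most $2k^2$.
   Context: A $k$-coloring of a graph $G$ is a map $V(G)\to\{1,\ldots,k\}$ with adjacent vertices receiving different colors. The set of colors used by a coloring $\gamma$ is $\{\gamma(v)\mid v\in V(G)\}$. The $k$-color graph $\mathcal{C}_k(G)$ has the $k$-colorings of $G$ as vertices, two being adjacent iff they differ on exactly one vertex. A $k$-recoloring sequence from $\alpha$ to $\beta$ of length $m$ is a sequence $\alpha=\alpha_0,\ldots,\alpha_m=\beta$ of $k$-colorings such that for each $i$, either $\alpha_i=\alpha_{i+1}$ or $\alpha_i,\alpha_{i+1}$ are adjacent in $\mathcal{C}_k(G)$. A recoloring sequence is a $k$-recoloring sequence for some integer $k$. *)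

From mathcomp Require Import all_boot.
Set Implicit Arguments. Unset Strict Implicit. Unset Printing Implicit Defensive.

Definition is_coloring (T : finType) (e : rel T) (m : nat) (c : T -> nat) : Prop :=
  (forall v, 1 <= c v <= m) /\ (forall u v, e u v -> c u != c v).

Definition num_colors (T : finType) (c : T -> nat) : nat :=
  size (undup [seq c v | v <- enum T]).

Definition recoloring_seq (T : finType) (e : rel T) (m : nat)
    (f : nat -> T -> nat) (L : nat) (a b : T -> nat) : Prop :=
  f 0 =1 a /\ f L =1 b /\
  (forall i, i <= L -> is_coloring e m (f i)) /\
  (forall i, i < L -> #|[pred v | f i v != f i.+1 v]| <= 1).

(* The graph B_k: vertex b^i_j is (i,j) (0-based indices); b^i_j ~ b^i'_j'
   iff i != i' and j != j'. *)
Definition Bk_adj (k : nat) : rel ('I_k * 'I_k) :=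
  fun u v => (u.1 != v.1) && (u.2 != v.2).

Definition alphak (k : nat) (v : 'I_k * 'I_k) : nat := (nat_of_ord v.1).+1.
Definition betak (k : nat) (v : 'I_k * 'I_k) : nat := (nat_of_ord v.2).+1.

(* Call a column of B_k clashing under a colouring when two of its vertices
   share a colour.  No column clashes under alpha^k, all do under beta^k (for
   k >= 2), and recolouring one vertex creates at most one clashing column, so
   some colouring of the sequence has exactly k - 1 clashing columns.  A colour
   class of B_k lies in a row or in a column; hence the k vertices of the
   remaining column and one vertex of each clashing pair carry 2k - 1 distinct
   colours.  Conversely, moving the vertices column by column to the colour
   k + j of their column j < k (column k directly to k), and then column by
   column to beta^k, takes 2k^2 steps and uses 2k - 1 colours. *)

From mathcomp Require Import all_boot zify.
Set Implicit Arguments. Unset Strict Implicit. Unset Printing Implicit Defensive.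

Lemma uniq_leq_num_colors (T : finType) (c : T -> nat) (s : seq T) :
  uniq (map c s) -> size s <= num_colors c.
Proof.
move=> uniq_cs; rewrite /num_colors -(size_map c).
apply: uniq_leq_size => // _ /mapP [v _ ->].
by rewrite mem_undup map_f ?mem_enum.
Qed.

Lemma step1_ivt (g : nat -> nat) (L x : nat) :
  g 0 <= x <= g L -> (forall i, i < L -> g i.+1 <= (g i).+1) ->
  exists2 i, i <= L & g i = x.
Proof.
case/andP=> g0_le le_gL step.
have exP : exists n, x <= g n by exists L.
case: (ex_minnP exP) => m x_le min_m.
have m_le : m <= L by apply: min_m.
exists m => //; case: m x_le min_m m_le => [|n] x_le min_n n_lt; first lia.
have gn_lt : g n < x by rewrite ltnNge; apply/negP => /min_n; rewrite ltnn.
have := step n n_lt; lia.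
Qed.

Section ClashingColumns.

Variable k : nat.
Implicit Types (c : 'I_k * 'I_k -> nat) (j : 'I_k).

Definition clash_cols c : {set 'I_k} :=
  [set j | [exists i, exists i', (i != i') && (c (i, j) == c (i', j))]].

Lemma clash_colsP c j :
  reflect (exists i i', i != i' /\ c (i, j) = c (i', j)) (j \in clash_cols c).
Proof.
rewrite inE; apply: (iffP existsP) => [[i /existsP [i' /andP [ne /eqP eq_c]]]|].
  by exists i, i'.
by case=> i [i' [ne eq_c]]; exists i; apply/existsP; exists i'; rewrite ne eq_c eqxx.
Qed.

Lemma clash_cols_alphak : clash_cols (@alphak k) = set0.
Proof.
apply/setP=> j; rewrite in_set0; apply/negbTE/clash_colsP => -[i [i' [ne []]]].
by move/val_inj => eq_i; rewrite eq_i eqxx in ne.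
Qed.

Lemma clash_cols_betak : 1 < k -> clash_cols (@betak k) = [set: 'I_k].
Proof.
move=> k_gt1; apply/setP=> j; rewrite in_setT; apply/clash_colsP.
by exists (Ordinal (ltnW k_gt1)), (Ordinal k_gt1).
Qed.

Lemma clash_cols_sub c c' (D : {set 'I_k}) :
  (forall v, v.2 \notin D -> c v = c' v) -> clash_cols c' \subset D :|: clash_cols c.
Proof.
move=> eq_out; apply/subsetP=> j /clash_colsP [i [i' [ne eq_c']]].
rewrite inE; case: (boolP (j \in D)) => //= jD.
by apply/clash_colsP; exists i, i'; rewrite !eq_out.
Qed.

Lemma eq_clash_cols c c' : c =1 c' -> clash_cols c = clash_cols c'.
Proof.
have sub d d' : d =1 d' -> clash_cols d' \subset clash_cols d.
  by move=> eq_d; rewrite -[clash_cols d]set0U; apply: clash_cols_sub => v _.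
by move=> eq_cc'; apply/eqP; rewrite eqEsubset !sub //; apply: fsym.
Qed.

Lemma card_clash_cols_step c c' :
  #|[pred v | c v != c' v]| <= 1 -> #|clash_cols c'| <= #|clash_cols c|.+1.
Proof.
move=> /card_le1_eqP diff1.
case: (pickP [pred v | c v != c' v]) => [u u_diff | no_diff].
- have : clash_cols c' \subset [set u.2] :|: clash_cols c.
    apply: clash_cols_sub => v; rewrite inE => v_col; apply/eqP.
    apply: contraNT v_col => v_diff; rewrite (diff1 v u) //.
  by move/subset_leq_card; rewrite cardsU cards1; lia.
- have : clash_cols c' \subset set0 :|: clash_cols c.
    by apply: clash_cols_sub => v _; apply/eqP/negbFE/no_diff.
  by move/subset_leq_card; rewrite set0U; lia.
Qed.

Section ProperColoring.

Variable c : 'I_k * 'I_k -> nat.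
Hypothesis c_proper : forall u v, Bk_adj u v -> c u != c v.

Lemma Bk_same_color u v : c u = c v -> u.1 = v.1 \/ u.2 = v.2.
Proof.
move=> eq_c; case: (eqVneq u.1 v.1) => [|ne1]; first by left.
case: (eqVneq u.2 v.2) => [|ne2]; first by right.
by have := c_proper (u := u) (v := v); rewrite /Bk_adj ne1 ne2 eq_c eqxx => /(_ isT).
Qed.

(* Both vertices of the clashing pair would have to share a row with [v]. *)
Lemma clash_color_fresh i i' j v :
  i != i' -> c (i, j) = c (i', j) -> v.2 != j -> c v != c (i, j).
Proof.
move=> ne eq_c v_col; apply/eqP => eq_v.
have row_of w : w.2 = j -> c v = c w -> w.1 = v.1.
  move=> w_col /Bk_same_color [] // eq2; by rewrite eq2 w_col eqxx in v_col.
have /= eq_i := row_of (i, j) erefl eq_v.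
have /= eq_i' := row_of (i', j) erefl (etrans eq_v eq_c).
by rewrite eq_i eq_i' eqxx in ne.
Qed.

Lemma num_colors_clash j0 : j0 \notin clash_cols c -> k + #|clash_cols c| <= num_colors c.
Proof.
move=> j0_free.
have /fin_all_exists [w w_clash] : forall j, exists p : 'I_k * 'I_k,
    j \in clash_cols c -> p.1 != p.2 /\ c (p.1, j) = c (p.2, j).
  move=> j; case: (boolP (j \in clash_cols c)) => [/clash_colsP [i [i' clash]]|_].
    by exists (i, i').
  by exists (j0, j0).
have fresh j v : j \in clash_cols c -> v.2 != j -> c v != c ((w j).1, j).
  by case/w_clash => ne eq_c; exact: (clash_color_fresh ne eq_c).
pose s := [seq (i, j0) | i <- enum 'I_k] ++ [seq ((w j).1, j) | j <- enum (clash_cols c)].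
have -> : k + #|clash_cols c| = size s.
  by rewrite size_cat !size_map -enumT size_enum_ord -cardE.
apply: uniq_leq_num_colors; rewrite map_cat cat_uniq -!map_comp; apply/and3P; split.
- rewrite map_inj_uniq -?enumT ?enum_uniq // => i i' /= eq_c; apply/eqP; apply: contraT => ne.
  by case/negP: j0_free; apply/clash_colsP; exists i, i'.
- apply/hasPn => _ /mapP [j j_clash ->]; rewrite mem_enum in j_clash.
  apply/mapP => -[i _ /= eq_c].
  have j0_ne : j0 != j by apply: contraNneq j0_free => ->.
  by have := fresh j (i, j0) j_clash j0_ne; rewrite eq_c eqxx.
- rewrite map_inj_in_uniq ?enum_uniq // => j j'; rewrite !mem_enum => _ j'_clash /= eq_c.
  apply/eqP; apply: contraT => ne.
  by have := fresh j' ((w j).1, j) j'_clash ne; rewrite /= eq_c eqxx.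
Qed.

End ProperColoring.

End ClashingColumns.

Lemma Bk_recoloring_many_colors k m (f : nat -> 'I_k * 'I_k -> nat) L :
  0 < k -> recoloring_seq (@Bk_adj k) m f L (@alphak k) (@betak k) ->
  exists i, i <= L /\ 2 * k - 1 <= num_colors (f i).
Proof.
move=> k_gt0 [f0 [fL [f_col f_step]]].
pose g i := #|clash_cols (f i)|.
have [i i_le g_i] : exists2 i, i <= L & g i = k.-1.
  apply: step1_ivt => [|i i_lt]; last exact: card_clash_cols_step (f_step i i_lt).
  rewrite /g (eq_clash_cols f0) clash_cols_alphak cards0 /=.
  case: (ltnP 1 k) => [k_gt1|k_le1]; last lia.
  by rewrite (eq_clash_cols fL) clash_cols_betak // cardsT card_ord leq_pred.
have /card_gt0P [j0] : 0 < #|~: clash_cols (f i)|.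
  by have := cardsC (clash_cols (f i)); rewrite card_ord -/(g i) g_i; lia.
rewrite inE => j0_free; exists i; split => //.
by have := num_colors_clash (proj2 (f_col i i_le)) j0_free; rewrite -/(g i) g_i; lia.
Qed.

Section Schedule.

Variable k : nat.
Implicit Types (u v : 'I_k * 'I_k) (t : nat).

Definition col_rank v : nat := v.2 * k + v.1.

Lemma col_rank_lt_col u v : u.2 < v.2 -> col_rank u < col_rank v.
Proof.
rewrite /col_rank => lt_col; have : u.2.+1 * k <= v.2 * k by rewrite leq_mul2r lt_col orbT.
by have := ltn_ord u.1; rewrite mulSn; lia.
Qed.

Lemma col_rank_lt v : col_rank v < k * k.
Proof.
rewrite /col_rank; have : v.2.+1 * k <= k * k by rewrite leq_mul2r ltn_ord orbT.
by have := ltn_ord v.1; rewrite mulSn; lia.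
Qed.

Lemma col_rank_inj : injective col_rank.
Proof.
move=> u v eq_rank; have := ltn_ord u.1; have := ltn_ord v.1.
case: (ltngtP u.2 v.2) => [/col_rank_lt_col|/col_rank_lt_col|eq_col]; try lia.
move: eq_rank; rewrite /col_rank eq_col => /addnI eq_row.
by case: u v eq_col eq_row => [? ?] [? ?] /= /val_inj -> /val_inj ->.
Qed.

(* Column [k-1] goes straight to its final colour [k]: when its vertices are
   processed, every other vertex of row [k-1] already left colour [k]. *)
Definition temp_color (j : 'I_k) : nat := if j < k.-1 then k + j.+1 else j.+1.

Definition sched t v : nat :=
  if k * k + col_rank v < t then betak v
  else if col_rank v < t then temp_color v.2
  else alphak v.

Lemma sched_coloring t : is_coloring (@Bk_adj k) (2 * k - 1) (sched t).
Proof.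
split=> [[[i ltik] [j ltjk]]|[[i ltik] [j ltjk]] [[i' lti'k] [j' ltj'k]]].
  by rewrite /sched /temp_color /alphak /betak /=; repeat case: ifP; lia.
rewrite /Bk_adj -!val_eqE /= => /andP [ne_row ne_col].
have := col_rank_lt (Ordinal ltik, Ordinal ltjk).
have := col_rank_lt (Ordinal lti'k, Ordinal ltj'k).
have := @col_rank_lt_col (Ordinal ltik, Ordinal ltjk) (Ordinal lti'k, Ordinal ltj'k).
have := @col_rank_lt_col (Ordinal lti'k, Ordinal ltj'k) (Ordinal ltik, Ordinal ltjk).
rewrite /sched /temp_color /alphak /betak /col_rank /=.
by repeat case: ifP; move=> *; apply/eqP; lia.
Qed.

Lemma sched_change t v :
  sched t v != sched t.+1 v -> t = col_rank v \/ t = k * k + col_rank v.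
Proof.
case: (eqVneq (col_rank v) t) => [<-|ne_rank]; first by left.
case: (eqVneq (k * k + col_rank v) t) => [<-|ne_rank']; first by right.
by rewrite /sched !ltnS (leq_eqVlt (col_rank v)) (leq_eqVlt (k * k + _))
  (negbTE ne_rank) (negbTE ne_rank') eqxx.
Qed.

Lemma sched_step t : #|[pred v | sched t v != sched t.+1 v]| <= 1.
Proof.
apply/card_le1_eqP => u v; rewrite !inE => /sched_change ch_u /sched_change ch_v.
by apply: col_rank_inj; have := col_rank_lt u; have := col_rank_lt v; lia.
Qed.

End Schedule.

Lemma Bk_short_recoloring k :
  recoloring_seq (@Bk_adj k) (2 * k - 1) (@sched k) (2 * k ^ 2) (@alphak k) (@betak k).
Proof.
split; [|split; [|split]] => [v|v|t _|t _].
- by rewrite /sched !ltn0.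
- by rewrite /sched ifT // -mulnn; have := col_rank_lt v; lia.
- exact: sched_coloring.
- exact: sched_step.
Qed.

Theorem mainTheorem1 (k : nat) (hk : 1 <= k) :
  (forall (m : nat) (f : nat -> 'I_k * 'I_k -> nat) (L : nat),
      recoloring_seq (@Bk_adj k) m f L (@alphak k) (@betak k) ->
      exists i, i <= L /\ 2 * k - 1 <= num_colors (f i)) /\
  (exists (f : nat -> 'I_k * 'I_k -> nat) (L : nat),
      L <= 2 * k ^ 2 /\
      recoloring_seq (@Bk_adj k) (2 * k - 1) f L (@alphak k) (@betak k)).
Proof.
split=> [m f L|]; first exact: Bk_recoloring_many_colors.
by exists (@sched k), (2 * k ^ 2); split; last exact: Bk_short_recoloring.
Qed.
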